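(* An element $f\in C(X)_\mathcal{P}$ is almost clean (i.e. $f=r+e$ with $r$ a regular element, meaning a non-zero-divisor, and $e$ an idempotent of $C(X)_\mathcal{P}$) if and only if there exists a $\tau\mathcal{P}$-clopen subset $U$ of $X$ such that \[ int_{X_\mathcal{P}}(f^{-1}(\{1\}))\subseteq U\subseteq cl_{X_\mathcal{P}}(coz(f)). \]
   Context: Let $(X,\tau)$ be a $T_1$ topological space and $\mathcal{P}$ an ideal of closed subsets of $X$ (a nonempty family of closed sets closed under finite unions and under taking closed subsets). For $f\colon X\to\mathbb{R}$, $D_f$ denotes the set of points of discontinuity of $f$, and $C(X)_\mathcal{P}=\{f\colon X\to\mathbb{R} : \overline{D_f}\in\mathcal{P}\}$, a commutative ring with unity under pointwise operations. For $f\in C(X)_\mathcal{P}$, $Z_\mathcal{P}(f)=\{x: f(x)=0\}$ and $coz(f)=X\setminus Z_\mathcal{P}(f)$. $X_\mathcal{P}$ is $X$ with the topology having base $\{coz(f): f\in C(X)_\mathcal{P}\}$; $int_{X_\mathcal{P}}$ and $cl_{X_\mathcal{P}}$ are interior and closure in $X_\mathcal{P}$. A set $U\subseteq X$ is $\tau\mathcal{P}$-clopen if $U=Z_\mathcal{P}(f)=X\setminus Z_\mathcal{P}(g)$ for some $f,g\in C(X)_\mathcal{P}$. *)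

From HB Require Import structures.
From mathcomp Require Import all_boot all_order all_algebra.
From mathcomp Require Import all_classical all_reals all_analysis.
From mathcomp Require Import Rstruct Rstruct_topology.
From Stdlib Require Import Reals.

Set Implicit Arguments.
Unset Strict Implicit.
Unset Printing Implicit Defensive.
Import Order.TTheory GRing.Theory Num.Theory.
Local Open Scope classical_set_scope.
Local Open Scope ring_scope.

Section Defs.
Variable X : topologicalType.

Definition closed_ideal (P : set (set X)) : Prop :=
  [/\ P !=set0,
      (forall A, P A -> closed A),
      (forall A B, P A -> P B -> P (A `|` B)) &
      (forall A B, P A -> closed B -> B `<=` A -> P B)].

Definition discont (f : X -> R) : set X :=
  [set x | ~ {for x, continuous f}].

Definition CP (P : set (set X)) (f : X -> R) : Prop :=
  P (closure (discont f)).

Definition ZP (f : X -> R) : set X := [set x | f x = 0].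
Definition coz (f : X -> R) : set X := [set x | f x <> 0].

(* interior and closure in X_P, the topology on X with base
   { coz f : f in C(X)_P }, written out through the base *)
Definition intXP (P : set (set X)) (A : set X) : set X :=
  [set x | exists f, [/\ CP P f, coz f x & coz f `<=` A]].

Definition clXP (P : set (set X)) (A : set X) : set X :=
  [set x | forall f, CP P f -> coz f x -> coz f `&` A !=set0].

Definition tauP_clopen (P : set (set X)) (U : set X) : Prop :=
  exists f g, [/\ CP P f, CP P g, U = ZP f & U = ~` ZP g].

Definition regularP (P : set (set X)) (r : X -> R) : Prop :=
  CP P r /\
  forall g, CP P g -> (fun x => r x * g x) = (fun _ => 0) -> g = (fun _ => 0).

Definition idempotentP (P : set (set X)) (e : X -> R) : Prop :=
  CP P e /\ (fun x => e x * e x) = e.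

Definition almost_cleanP (P : set (set X)) (f : X -> R) : Prop :=
  exists r e, [/\ regularP P r, idempotentP P e & f = (fun x => r x + e x)].

End Defs.

From HB Require Import structures.
From mathcomp Require Import all_boot all_order all_algebra.
From mathcomp Require Import all_classical all_reals all_analysis.
From mathcomp Require Import Rstruct Rstruct_topology.
From Stdlib Require Import Reals.
Local Open Scope classical_set_scope.
Local Open Scope ring_scope.
Set Implicit Arguments.
Unset Strict Implicit.
Unset Printing Implicit Defensive.
Import Order.TTheory GRing.Theory Num.Theory.

(* An idempotent of C(X)_P takes only the values 0 and 1, so it is the
   indicator 1_V of some V, and 1_V lies in C(X)_P exactly when V is
   tauP-clopen.  Hence f is almost clean iff f - 1_V is regular for some
   tauP-clopen V, and U := X \ V is the required set.  An element r is regular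
   iff no h in C(X)_P with coz h nonempty has coz h inside Z(r).  Multiplying h
   by 1_V or by 1_U localizes coz h to V or to U, where f - 1_V equals f - 1
   and f respectively; this turns regularity of f - 1_V into the inclusions
   int(f^-1(1)) <= U and U <= cl(coz f). *)

Section CP_ring.
Variables (X : topologicalType) (P : set (set X)).
Hypothesis hP : closed_ideal P.

Lemma CP_lift2 (f g h : X -> R) : CP P f -> CP P g ->
  (forall x, {for x, continuous f} -> {for x, continuous g} ->
     {for x, continuous h}) ->
  CP P h.
Proof.
case: hP => _ _ PU Psub Pf Pg fgh.
apply: (Psub _ _ (PU _ _ Pf Pg)); first exact: closed_closure.
rewrite -closureU; apply: closureS => x hx.
apply: contrapT => /not_orP[/contrapT cf /contrapT cg].
by apply: hx; exact: fgh.
Qed.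

Lemma CP_cst (c : R) : CP P (fun=> c).
Proof.
case: hP => -[A PA] _ _ Psub.
apply: (Psub A) => //; first exact: closed_closure.
have -> : discont (fun _ : X => c) = set0.
  by apply/seteqP; split=> // x; apply; exact: cvg_cst.
by rewrite closure0.
Qed.

Lemma CP_sub (f g : X -> R) : CP P f -> CP P g -> CP P (fun x => f x - g x).
Proof. by move=> Pf Pg; apply: (CP_lift2 Pf Pg) => x; exact: (@cvgB _ R^o). Qed.

Lemma CP_mul (f g : X -> R) : CP P f -> CP P g -> CP P (fun x => f x * g x).
Proof. by move=> Pf Pg; apply: (CP_lift2 Pf Pg) => x; exact: cvgM. Qed.

Lemma regularP_cozP r : CP P r ->
  regularP P r <-> forall h, CP P h -> coz h `<=` ZP r -> coz h = set0.
Proof.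
move=> Pr; split=> [[_ reg] h Ph hr | reg]; last split=> // g Pg rg.
- have -> : h = fun=> 0.
    apply: reg => //; apply/funext => y.
    by have [hy|/hr ->] := pselect (h y = 0); rewrite ?hy ?mulr0 ?mul0r.
  by apply/seteqP; split=> // x; apply.
- have cozg0 : coz g = set0.
    apply: reg => // y gy; have /eqP := congr1 (@^~ y) rg.
    by rewrite mulf_eq0 => /orP[/eqP //|/eqP].
  by apply/funext => x; apply: contrapT => gx; rewrite -[False]/(set0 x) -cozg0.
Qed.

End CP_ring.

Section indicator.
Variable X : topologicalType.
Implicit Types (A : set X) (h : X -> R).

Lemma indic_setC A : \1_(~` A) = (fun x => 1 - \1_A x) :> (X -> R).
Proof.
apply/funext => x; rewrite !indicE in_setC.
by case: (x \in A); rewrite ?subr0 ?subrr.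
Qed.

Lemma ZP_indic A : ZP (\1_A : X -> R) = ~` A.
Proof.
apply/seteqP; split=> x; rewrite /ZP /= indicE.
- by move=> + Ax; rewrite mem_set //= => /eqP; rewrite oner_eq0.
- by move=> nAx; rewrite memNset.
Qed.

Lemma coz_mul_indic h A : coz (fun x => h x * \1_A x) = coz h `&` A.
Proof.
apply/seteqP; split=> x; rewrite /coz /= indicE.
- by case: (boolP (x \in A)) => [/set_mem|_]; rewrite ?mulr1 ?mulr0.
- by case=> hx /mem_set ->; rewrite mulr1.
Qed.

Lemma idempotent_indic h : (fun x => h x * h x) = h -> h = \1_(coz h).
Proof.
move=> hh; apply/funext => x; rewrite indicE.
have /eqP := congr1 (@^~ x) hh.
rewrite -subr_eq0 -{3}[h x]mulr1 -mulrBr mulf_eq0 subr_eq0.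
case/orP => /eqP hx.
- by rewrite hx memNset // => /(_ hx).
- by rewrite hx mem_set // /coz /= hx; apply/eqP; exact: oner_neq0.
Qed.

Lemma indic_continuous_at A x :
  nbhs x A \/ nbhs x (~` A) -> {for x, continuous (\1_A : X -> R)}.
Proof.
case=> nA;
  [apply: (near_cst_continuous (1 : R)) | apply: (near_cst_continuous (0 : R))];
  by apply: filterS nA => y Ay; rewrite indicE ?(mem_set Ay) ?(memNset Ay).
Qed.

End indicator.

Section indicator_CP.
Variables (X : topologicalType) (P : set (set X)).
Hypothesis hP : closed_ideal P.

Lemma CP_indicC A : CP P \1_A -> CP P \1_(~` A).
Proof.
by move=> PA; rewrite indic_setC; apply: CP_sub PA => //; exact: CP_cst.
Qed.

Lemma tauP_clopen_indicP A : tauP_clopen P A <-> CP P \1_A.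
Proof.
split=> [[a [b [Pa Pb Aa Ab]]]|PA].
- apply: CP_lift2 Pa Pb _ => // x ca cb; apply: indic_continuous_at.
  have [Ax|nAx] := pselect (A x).
  + left; have bx : b x != 0 by apply/eqP; rewrite Ab in Ax.
    by rewrite Ab; apply: filterS (@cvgr_neq0 _ R^o _ _ _ b _ cb bx) => y /eqP.
  + right; have ax : a x != 0 by apply/eqP => a0; apply: nAx; rewrite Aa.
    by rewrite Aa; apply: filterS (@cvgr_neq0 _ R^o _ _ _ a _ ca ax) => y /eqP.
- exists \1_(~` A), \1_A; split; [exact: CP_indicC | by [] | |].
  + by rewrite ZP_indic setCK.
  + by rewrite ZP_indic setCK.
Qed.

Lemma idempotentP_indic A : CP P \1_A -> idempotentP P \1_A.
Proof.
split=> //; apply/funext => x.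
by rewrite indicE; case: (x \in A); rewrite ?mulr0 ?mulr1.
Qed.

End indicator_CP.

Section almost_clean.
Variables (X : topologicalType) (P : set (set X)) (f : X -> R) (V : set X).
Hypotheses (hP : closed_ideal P) (hf : CP P f) (hV : CP P \1_V).

Let r x := f x - \1_V x.
Let Pr : CP P r. Proof. exact: CP_sub. Qed.
Let hVC : CP P \1_(~` V). Proof. exact: CP_indicC. Qed.
Let r_in y : V y -> r y = f y - 1.
Proof. by move=> Vy; rewrite /r indicE mem_set. Qed.
Let r_out y : ~ V y -> r y = f y.
Proof. by move=> nVy; rewrite /r indicE memNset ?subr0. Qed.

Lemma intXP_preim1_sub_setC :
  regularP P r -> intXP P (f @^-1` [set 1]) `<=` ~` V.
Proof.
move=> /(regularP_cozP Pr) reg x [h [Ph hx f1]] Vx.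
have : (coz h `&` V) x by [].
rewrite -coz_mul_indic (reg _ (CP_mul hP Ph hV)) // coz_mul_indic => y [hy Vy].
by rewrite /ZP /= r_in // (f1 y hy) subrr.
Qed.

Lemma setC_sub_clXP_coz : regularP P r -> ~` V `<=` clXP P (coz f).
Proof.
move=> /(regularP_cozP Pr) reg x nVx h Ph hx.
apply: contrapT => /nonemptyPn hf0.
have : (coz h `&` ~` V) x by [].
rewrite -coz_mul_indic (reg _ (CP_mul hP Ph hVC)) //.
rewrite coz_mul_indic => y [hy nVy].
rewrite /ZP /= r_out //; apply: contrapT => fy.
by rewrite -[False]/(set0 y) -hf0.
Qed.

Lemma sub_indic_regularP : intXP P (f @^-1` [set 1]) `<=` ~` V ->
  ~` V `<=` clXP P (coz f) -> regularP P r.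
Proof.
move=> int_sub sub_cl; apply/(regularP_cozP Pr) => h Ph hr.
apply/seteqP; split=> // x hx.
have [Vx|nVx] := pselect (V x).
- apply: (int_sub x _ Vx); exists (fun y => h y * \1_V y); split.
  + exact: CP_mul.
  + by rewrite coz_mul_indic.
  + rewrite coz_mul_indic => y [/hr + Vy]; rewrite /ZP /= r_in // => /eqP.
    by rewrite subr_eq0 => /eqP.
- have hx' : coz (fun y => h y * \1_(~` V) y) x by rewrite coz_mul_indic.
  have [y []] := sub_cl x nVx _ (CP_mul hP Ph hVC) hx'.
  by rewrite coz_mul_indic => -[/hr + nVy]; rewrite /ZP /= r_out.
Qed.

Lemma regularP_sub_indicP : regularP P (fun x => f x - \1_V x) <->
  intXP P (f @^-1` [set 1]) `<=` ~` V /\ ~` V `<=` clXP P (coz f).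
Proof.
split=> [reg | [] ]; last exact: sub_indic_regularP.
by split; [exact: intXP_preim1_sub_setC | exact: setC_sub_clXP_coz].
Qed.

End almost_clean.

Theorem theorem3p11 (X : topologicalType) (hT1 : accessible_space X)
  (P : set (set X)) (hP : closed_ideal P) (f : X -> R) (hf : CP P f) :
  almost_cleanP P f <->
  exists U : set X, [/\ tauP_clopen P U,
    intXP P (f @^-1` [set 1]) `<=` U &
    U `<=` clXP P (coz f)].
Proof.
split.
- move=> [r [e [reg [Pe ee] fre]]].
  have eE : e = \1_(coz e) := idempotent_indic ee.
  rewrite eE in Pe.
  have rE : r = fun x => f x - \1_(coz e) x.
    by apply/funext => x; rewrite fre /= -eE addrK.
  rewrite rE in reg.
  have [int_sub sub_cl] := (regularP_sub_indicP hP hf Pe).1 reg.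
  exists (~` coz e); split=> //.
  by apply/(tauP_clopen_indicP hP); exact: CP_indicC.
- move=> [U [/(tauP_clopen_indicP hP) PU int_sub sub_cl]].
  have PUC := CP_indicC hP PU.
  exists (fun x => f x - \1_(~` U) x), \1_(~` U); split.
  + by apply/(regularP_sub_indicP hP hf PUC); rewrite setCK.
  + exact: idempotentP_indic.
  + by apply/funext => x; rewrite subrK.
Qed.
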